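(* For each $\otimes\in\{\mathrm{del},\mathrm{add},\mathrm{edit}\}$, $\textsc{RM}^{\otimes}_{\mathrm{undir}}(a)\not\subseteq\mathrm{AC}^0$, i.e. some sentence $\phi=\forall x\,\psi$ with $\psi$ quantifier-free over a binary relation $E$ yields a problem $\textsc{RM}^{\otimes}_{\mathrm{undir}}(\phi)$ not in $\mathrm{AC}^0$.
   Context: An undirected graph is $(V,E)$ with $E\subseteq V\times V$ symmetric (self-loops allowed). For $S\subseteq V\times V$, $\|S\|=|\{\{u,v\}:(u,v)\in S\}|$. For a first-order sentence $\phi$ over $\{E\}$, $\textsc{RM}^{\mathrm{edit}}_{\mathrm{undir}}(\phi)$: given an undirected graph $(V,E)$ and $k\in\mathbb N$, is there $S$ with $\|S\|\le k$ such that $(V,E\triangle S)$ is undirected and satisfies $\phi$; del (resp. add) versions require $S\subseteq E$ (resp. $S\cap E=\emptyset$). $\mathrm{AC}^0$: problems decided by constant-depth polynomial-size unbounded fan-in and/or/not circuit families. *)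

From mathcomp Require Import all_boot.
Set Implicit Arguments. Unset Strict Implicit. Unset Printing Implicit Defensive.

Inductive qf (V : Type) : Type :=
| QTrue | QFalse
| QEdge of V & V
| QEq of V & V
| QNot of qf V
| QAnd of qf V & qf V
| QOr of qf V & qf V.

Fixpoint qf_eval (V : Type) (T : eqType) (E : rel T) (a : V -> T) (f : qf V) : bool :=
  match f with
  | QTrue => true
  | QFalse => false
  | QEdge u v => E (a u) (a v)
  | QEq u v => a u == a v
  | QNot g => ~~ qf_eval E a g
  | QAnd g h => qf_eval E a g && qf_eval E a h
  | QOr g h => qf_eval E a g || qf_eval E a h
  end.

(* The sentence  phi = forall x, psi  with psi quantifier-free in the single
   variable x (variable type unit); satisfaction in the structure (V,E). *)
Definition sat_forall1 (n : nat) (E : rel 'I_n) (psi : qf unit) : Prop :=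
  forall x : 'I_n, qf_eval E (fun _ => x) psi.

Inductive rm_op := RMdel | RMadd | RMedit.

Definition pair_norm (n : nat) (S : {set 'I_n * 'I_n}) : nat :=
  #|[set [set p.1; p.2] | p in S]|.

Definition symdiff (n : nat) (E : rel 'I_n) (S : {set 'I_n * 'I_n}) : rel 'I_n :=
  fun u v => E u v (+) ((u, v) \in S).

Definition RM (op : rm_op) (psi : qf unit) (n : nat) (E : rel 'I_n) (k : nat) : Prop :=
  exists S : {set 'I_n * 'I_n},
    [/\ pair_norm S <= k,
        symmetric (symdiff E S),
        sat_forall1 (symdiff E S) psi &
        match op with
        | RMdel => forall p, p \in S -> E p.1 p.2
        | RMadd => forall p, p \in S -> ~~ E p.1 p.2
        | RMedit => True
        end].

Inductive circ : Type :=
| CInp of nat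
| CConst of bool
| CNot of circ
| CAnd of seq circ
| COr of seq circ.

Fixpoint ceval (x : nat -> bool) (c : circ) : bool :=
  match c with
  | CInp i => x i
  | CConst b => b
  | CNot d => ~~ ceval x d
  | CAnd l => all id (map (ceval x) l)
  | COr l => has id (map (ceval x) l)
  end.

Fixpoint cdepth (c : circ) : nat :=
  match c with
  | CInp _ | CConst _ => 0
  | CNot d => (cdepth d).+1
  | CAnd l | COr l => (foldr maxn 0 (map cdepth l)).+1
  end.

Fixpoint csize (c : circ) : nat :=
  match c with
  | CInp _ | CConst _ => 1
  | CNot d => (csize d).+1
  | CAnd l | COr l => (sumn (map csize l)).+1
  end.

(* Encoding of an instance (n-vertex graph E, budget k) as a bit string of
   length 2*n*n: bit u*n+v is E(u,v); bit n*n+i is [i < k] (thermometer code;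
   since ||S|| <= n*n always, min(k, n*n) carries all relevant information). *)
Definition encode (n : nat) (E : rel 'I_n) (k : nat) : nat -> bool :=
  fun i =>
    if i < n * n then [exists u : 'I_n, exists v : 'I_n, (i == u * n + v) && E u v]
    else if i < 2 * (n * n) then (i - n * n < k)
    else false.

(* A problem on (undirected graph, k) instances is in (non-uniform) AC^0 if
   some family of circuits of constant depth and size polynomial in n decides
   it on all encoded instances with E symmetric. *)
Definition in_AC0 (P : forall n : nat, rel 'I_n -> nat -> Prop) : Prop :=
  exists (d c : nat) (C : nat -> circ),
    forall n, [/\ cdepth (C n) <= d,
                  csize (C n) <= c * n.+1 ^ c &
                  forall (E : rel 'I_n) (k : nat), symmetric E ->
                    (ceval (encode E k) (C n) <-> P n E k)].

(* Take psi(x) := ~ E(x,x) for deletion and psi(x) := E(x,x) for addition and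
   editing.  On a graph whose only edges are loops, encoding a bit vector y so
   that the vertices violating psi are those with y u, a cheapest modification
   fixes exactly these vertices: RM(psi) decides the threshold #|y| <= k.  An OR
   over odd j of [#|y| <= j /\ ~ #|y| <= j - 1] then computes parity, so an AC0
   family for RM(psi) yields one for parity.
   Parity is not in AC0 (Razborov-Smolensky).  A circuit of depth d and size at
   most 2^l/4 agrees with a polynomial of degree (2l)^d over F_3 outside a
   quarter of the cube (OR gates are approximated by random sums of squares).
   On a set G where a degree-D polynomial agrees with parity, chi setT is of
   degree D, so every function on G is a polynomial of degree D + n/2 and |G| is
   at most the number of such monomials.  For odd n = 2m+1 these counts force
   n <= 16 (2l)^(2d), impossible for l = O(log n). *)

From mathcomp Require Import all_boot all_algebra.
From mathcomp Require Import zify ring.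
Set Implicit Arguments. Unset Strict Implicit. Unset Printing Implicit Defensive.
Import GRing.Theory.

Definition setY (T : finType) (A B : {set T}) := (A :\: B) :|: (B :\: A).

Lemma setYK (T : finType) (A B : {set T}) : setY (setY A B) B = A.
Proof. by apply/setP => i; rewrite !inE; case: (i \in A); case: (i \in B). Qed.

Lemma card_setY (T : finType) (A B : {set T}) : #|setY A B| <= #|A| + #|B|.
Proof.
apply: leq_trans (leq_card_setU _ _) _.
by apply: leq_add; apply/subset_leq_card/subsetP => i; rewrite inE => /andP[].
Qed.

Lemma card_bigcup_le (I T : finType) (A : I -> {set T}) :
  #|\bigcup_i A i| <= \sum_i #|A i|.
Proof.
elim/big_rec2: _ => [|i U s _ IH]; first by rewrite cards0.
by apply: leq_trans (leq_card_setU _ _) _; rewrite leq_add2l.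
Qed.

Lemma card_setsT (T : finType) : #|{set T}| = 2 ^ #|T|.
Proof. by rewrite -(cardsT {set T}) -powersetT card_powerset cardsT. Qed.

Lemma exists_good_sample (A X : finType) (bad : A -> X -> bool) w :
  0 < #|A| -> (forall x, #|[set a | bad a x]| * w <= #|A|) ->
  exists a, #|[set x | bad a x]| * w <= #|X|.
Proof.
move=> A_gt0 perx; apply/existsP; apply/contraT; rewrite negb_exists => /forallP many.
have total : \sum_a #|[set x | bad a x]| * w = \sum_x #|[set a | bad a x]| * w.
  rewrite -!big_distrl /= (eq_bigr (fun a => \sum_x bad a x)); last first.
    by move=> a _; rewrite -sum1_card big_mkcond /=; apply: eq_bigr => x _; rewrite inE.
  rewrite exchange_big /=; congr (_ * _); apply: eq_bigr => x _.
  by rewrite -sum1_card [RHS]big_mkcond /=; apply: eq_bigr => a _; rewrite inE.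
have lo : #|A| * #|X|.+1 <= \sum_a #|[set x | bad a x]| * w.
  by rewrite -sum_nat_const; apply: leq_sum => a _; rewrite ltnNge many.
have hi : \sum_x #|[set a | bad a x]| * w <= #|X| * #|A|.
  by rewrite -sum_nat_const; apply: leq_sum => x _; exact: perx.
move: lo hi; rewrite total; nia.
Qed.

Local Notation F := 'Z_3.
Local Open Scope ring_scope.

Lemma Z3_sqrf (x : F) : x != 0 -> x * x = 1.
Proof. by case: x => [[|[|[|]]] ?] // _; apply: val_inj. Qed.

Lemma Z3_N1 : -1 = 1 + 1 :> F. Proof. exact: val_inj. Qed.

Section MultilinearPolynomials.
Variable n : nat.
Local Notation X := {ffun 'I_n -> bool}.

Definition sg (b : bool) : F := (-1) ^+ b.

Definition chi (T : {set 'I_n}) (x : X) : F := \prod_(i in T) sg (x i).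

Lemma chiY S T x : chi S x * chi T x = chi (setY S T) x.
Proof.
rewrite /chi big_mkcond [X in _ * X]big_mkcond [RHS]big_mkcond -big_split /=; apply: eq_bigr => i _.
rewrite !inE; case: (i \in S); case: (i \in T); rewrite /= ?mulr1 ?mul1r //.
by rewrite -signr_addb addbb.
Qed.

Lemma chi0 x : chi set0 x = 1.
Proof. by rewrite /chi big_set0. Qed.

Lemma chi1 i x : chi [set i] x = sg (x i).
Proof. by rewrite /chi big_set1. Qed.

Lemma chiT_sg T x : chi T x = chi setT x * chi (~: T) x.
Proof. by rewrite chiY; congr chi; apply/setP => i; rewrite !inE; case: (i \in T). Qed.

Definition mleval (s : seq (F * {set 'I_n})) (x : X) : F :=
  \sum_(p <- s) p.1 * chi p.2 x.

Definition mldeg_le D (s : seq (F * {set 'I_n})) := all (fun p : F * {set 'I_n} => #|p.2| <= D)%N s.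

Definition deg_le D (f : X -> F) := exists2 s, mldeg_le D s & f =1 mleval s.

Lemma deg_le_ext D f g : f =1 g -> deg_le D f -> deg_le D g.
Proof. by move=> fg [s Ds fs]; exists s => // x; rewrite -fg. Qed.

Lemma deg_le_mono D D' f : (D <= D')%N -> deg_le D f -> deg_le D' f.
Proof.
move=> DD' [s Ds fs]; exists s => //.
by apply/allP => p /(allP Ds) /leq_trans; apply.
Qed.

Lemma deg_le_const D (a : F) : deg_le D (fun=> a).
Proof.
exists [:: (a, set0)]; first by rewrite /mldeg_le /= cards0.
by move=> x; rewrite /mleval big_seq1 chi0 mulr1.
Qed.

Lemma deg_le_sg i : deg_le 1 (fun x => sg (x i)).
Proof.
exists [:: (1, [set i])]; first by rewrite /mldeg_le /= cards1.
by move=> x; rewrite /mleval big_seq1 mul1r chi1.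
Qed.

Lemma deg_le_add D f g : deg_le D f -> deg_le D g -> deg_le D (fun x => f x + g x).
Proof.
move=> [s Ds fs] [t Dt gt]; exists (s ++ t); first by rewrite /mldeg_le all_cat; apply/andP.
by move=> x; rewrite /mleval big_cat fs gt.
Qed.

Lemma deg_le_mul D D' f g :
  deg_le D f -> deg_le D' g -> deg_le (D + D') (fun x => f x * g x).
Proof.
move=> [s Ds fs] [t Dt gt].
exists [seq (p.1 * q.1, setY p.2 q.2) | p <- s, q <- t].
  apply/all_allpairsP => p q ps qt; apply: leq_trans (card_setY _ _) _.
  by apply: leq_add; [exact: (allP Ds) | exact: (allP Dt)].
move=> x; rewrite fs gt /mleval big_allpairs_dep big_distrl /=.
apply: eq_bigr => p _; rewrite big_distrr /=; apply: eq_bigr => q _.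
by rewrite -chiY mulrACA.
Qed.

Lemma deg_le_scale D (a : F) f : deg_le D f -> deg_le D (fun x => a * f x).
Proof. exact: deg_le_mul (deg_le_const 0 a). Qed.

Lemma deg_le_sub D f g : deg_le D f -> deg_le D g -> deg_le D (fun x => f x - g x).
Proof.
move=> Df Dg; apply: deg_le_ext (deg_le_add Df (deg_le_scale (-1) Dg)) => x.
by rewrite mulN1r.
Qed.

Lemma deg_le_sum (I : Type) (r : seq I) (P : pred I) D (f : I -> X -> F) :
  (forall i, deg_le D (f i)) -> deg_le D (fun x => \sum_(i <- r | P i) f i x).
Proof.
move=> Df; elim: r => [|i r IH].
  by apply: deg_le_ext (deg_le_const D 0) => x; rewrite big_nil.
case Pi: (P i); last by apply: deg_le_ext IH => x; rewrite big_cons Pi.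
by apply: deg_le_ext (deg_le_add (Df i) IH) => x; rewrite big_cons Pi.
Qed.

Lemma deg_le_prod (I : finType) D (f : I -> X -> F) :
  (forall i, deg_le D (f i)) -> deg_le (#|I| * D) (fun x => \prod_i f i x).
Proof.
move=> Df; rewrite cardE.
apply: (@deg_le_ext _ (fun x => \prod_(i <- enum I) f i x)) => [x|]; first by rewrite big_enum.
elim: (enum I) => [|i r IH].
  by apply: deg_le_ext (deg_le_const _ 1) => x; rewrite big_nil.
by apply: deg_le_ext (deg_le_mul (Df i) IH) => x; rewrite big_cons.
Qed.

Lemma sg_eq_indicator a b : -1 - sg a * sg b = (a == b)%:R.
Proof. by case: a; case: b; apply: val_inj. Qed.

Lemma deg_le_all (f : X -> F) : deg_le n f.
Proof.
pose delta (a x : X) := \prod_i (-1 - sg (a i) * sg (x i)).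
have deltaE a x : delta a x = (x == a)%:R.
  rewrite /delta (eq_bigr _ (fun i _ => sg_eq_indicator _ _)).
  have [->|xa] := eqVneq x a; first by rewrite big1 // => i _; rewrite eqxx.
  have [i xai] : exists i, a i != x i.
    apply/existsP; apply: contraR xa; rewrite negb_exists => /forallP ax.
    by apply/eqP/ffunP => i; apply/esym/eqP/negbNE.
  by rewrite (bigD1 i) //= (negbTE xai) mul0r.
have Ddelta a : deg_le n (delta a).
  rewrite -[n]muln1 -[X in (X * 1)%N]card_ord; apply: deg_le_prod => i.
  exact: deg_le_sub (deg_le_const _ _) (deg_le_scale _ (deg_le_sg i)).
apply: deg_le_ext (deg_le_sum (index_enum X) xpredT (fun a => deg_le_scale (f a) (Ddelta a))).
move=> x; rewrite (bigD1 x) //= deltaE eqxx mulr1 big1 ?addr0 // => a /negbTE ax.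
by rewrite deltaE eq_sym ax mulr0.
Qed.

End MultilinearPolynomials.

Arguments deg_le_const {n} D a.

Definition b2F (b : bool) : F := if b then 1 else 0.

Section Smolensky.
Variable n : nat.
Local Notation X := {ffun 'I_n -> bool}.

Lemma chi_setT_parity (x : X) : chi setT x = 1 + b2F (odd #|[set i | x i]|).
Proof.
have -> : chi setT x = \prod_(i | x i) (-1 : F).
  by rewrite /chi big_mkcond [RHS]big_mkcond; apply: eq_bigr => i _; rewrite inE; case: (x i).
rewrite prodr_const -cardsE -signr_odd.
by case: (odd _); rewrite /= ?addr0 ?expr1 ?Z3_N1.
Qed.

(* On [G] a monomial [chi T] with [#|T| > n/2] equals [P * chi (~: T)]. *)
Lemma reduce_degree_on (G : {set X}) D (P : X -> F) : deg_le D P ->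
  {in G, chi setT =1 P} ->
  forall s0, exists2 s, mldeg_le (D + n./2) s & {in G, mleval s0 =1 mleval s}.
Proof.
move=> [sP DP Pe] GP; elim=> [|p s0 [s Ds s0s]]; first by exists [::].
have [small|large] := leqP #|p.2| n./2.
  exists (p :: s).
    by apply/andP; split; first exact: leq_trans small (leq_addl _ _).
  by move=> x xG; rewrite /mleval !big_cons -/(mleval s0 x) -/(mleval s x) s0s.
exists ([seq (p.1 * q.1, setY q.2 (~: p.2)) | q <- sP] ++ s).
  rewrite /mldeg_le all_cat -/(mldeg_le _ s) Ds andbT; apply/allP => r /mapP [q qP ->] /=.
  apply: leq_trans (card_setY _ _) _; apply: leq_add; first exact: (allP DP q qP).
  have := cardsC p.2; have := odd_double_half n; rewrite card_ord -addnn.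
  move: large (leq_b1 (odd n)); set h := n./2; set c := #|~: p.2|; set o := nat_of_bool (odd n); lia.
move=> x xG; rewrite /mleval big_cons big_cat /= big_map.
rewrite -/(mleval s0 x) -/(mleval s x) s0s //; congr (_ + _).
rewrite (chiT_sg p.2) GP // Pe /mleval big_distrl /= big_distrr /=.
by apply: eq_bigr => q _; rewrite -chiY !mulrA.
Qed.

Lemma card_le_monomials (G : {set X}) M :
  (forall f : X -> F, exists2 s, mldeg_le M s & {in G, f =1 mleval s}) ->
  (#|G| <= #|[set T : {set 'I_n} | #|T| <= M]|)%N.
Proof.
move=> span.
pose Mon := {T : {set 'I_n} | #|T| <= M}%N.
pose eval (c : {ffun Mon -> F}) : {ffun {x | x \in G} -> F} :=
  [ffun x => \sum_T c T * chi (val T) (val x)].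
have eval_surj g : exists c, eval c = g.
  pose f x := if insub x is Some x' then g x' else 0.
  have [s Ms fs] := span f.
  exists [ffun T => \sum_(p <- s | p.2 == val T) p.1].
  apply/ffunP => x; rewrite ffunE.
  transitivity (f (val x)); last by rewrite /f valK.
  rewrite fs ?(valP x) // /mleval.
  under eq_bigr do rewrite ffunE big_distrl /=.
  rewrite (exchange_big_dep xpredT) //= [LHS]big_seq [RHS]big_seq.
  apply: eq_bigr => p ps; have pM : (#|p.2| <= M)%N by exact: (allP Ms p ps).
  rewrite (big_pred1 (Sub p.2 pM : Mon)) // => T.
  by rewrite /= -val_eqE /= eq_sym.
have [inv invK] := fin_all_exists eval_surj.
have := leq_card inv (can_inj invK).
rewrite !card_ffun !card_sig card_ord leq_exp2l //.
by rewrite cardsE.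
Qed.

Lemma card_agree_parity D (p : X -> F) : deg_le D p ->
  (#|[set x : X | p x == b2F (odd #|[set i | x i]|)]| <=
   #|[set T : {set 'I_n} | #|T| <= D + n./2]|)%N.
Proof.
move=> Dp; apply: card_le_monomials => f.
have [s0 _ fs0] := deg_le_all f.
have D1p : deg_le D (fun x => 1 + p x) by exact: deg_le_add (deg_le_const _ _) Dp.
have GP : {in [set x | p x == b2F (odd #|[set i | x i]|)], chi setT =1 (fun x => 1 + p x)}.
  by move=> x; rewrite inE chi_setT_parity => /eqP ->.
have [s Ds s0s] := reduce_degree_on D1p GP s0.
by exists s => // x xG; rewrite fs0 s0s.
Qed.

End Smolensky.

Lemma sum_setY1 m (a : 'I_m -> F) i0 (T : {set 'I_m}) : i0 \in T ->
  \sum_(i in T) a i = a i0 + \sum_(i in setY T [set i0]) a i.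
Proof.
move=> i0T; rewrite (bigD1 i0) //=; congr (_ + _); apply: eq_bigl => i.
by rewrite !inE; case: (i =P i0) => [->|] /=; rewrite ?i0T ?andbT ?andbF ?orbF.
Qed.

(* Toggling [i0] maps the zero-sum subsets injectively to nonzero-sum ones. *)
Lemma card_zero_sum_subsets m (a : 'I_m -> F) i0 : a i0 != 0 ->
  (#|[set T : {set 'I_m} | (\sum_(i in T) a i == 0)%R]| * 2 <= 2 ^ m)%N.
Proof.
move=> a_i0; set Z := [set T | _].
have toggle_inj : injective (fun T => setY T [set i0]).
  by apply: (@can_inj _ _ _ (fun T => setY T [set i0])) => T; exact: setYK.
have toggleZ : [set setY T [set i0] | T in Z] \subset ~: Z.
  apply/subsetP => _ /imsetP [T + ->]; rewrite !inE => /eqP sum0.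
  have [i0T|i0T] := boolP (i0 \in T).
    apply: contra a_i0 => /eqP sumY0.
    by rewrite -sum0 (sum_setY1 _ i0T) sumY0 addr0.
  have i0Y : i0 \in setY T [set i0] by rewrite !inE eqxx (negbTE i0T).
  by rewrite (sum_setY1 _ i0Y) setYK sum0 addr0.
have := subset_leq_card toggleZ; rewrite card_imset //.
have := cardsC Z; rewrite card_setsT card_ord => <-.
by rewrite muln2 -addnn leq_add2l.
Qed.

Section RazborovOr.
Variables (n m l : nat) (ps : 'I_m -> {ffun 'I_n -> bool} -> F).
Variable bs : 'I_m -> {ffun 'I_n -> bool} -> bool.
Local Notation X := {ffun 'I_n -> bool}.

Definition or_approx (S : {ffun 'I_l -> {set 'I_m}}) (x : X) : F :=
  1 - \prod_j (1 - (\sum_(i in S j) ps i x) ^+ 2).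

Definition inputs_exact (x : X) := [forall i, ps i x == b2F (bs i x)].

Definition or_bad S := [set x | inputs_exact x && (or_approx S x != b2F [exists i, bs i x])].

Lemma deg_le_or_approx D S :
  (forall i, deg_le D (ps i)) -> deg_le (l * (D + D)) (or_approx S).
Proof.
move=> Dps; apply: deg_le_sub; first exact: deg_le_const.
rewrite -[X in deg_le (X * _)]card_ord; apply: deg_le_prod => j.
apply: deg_le_sub; first exact: deg_le_const.
by apply: deg_le_ext (deg_le_mul (deg_le_sum _ _ Dps) (deg_le_sum _ _ Dps)) => x; rewrite expr2.
Qed.

(* A random [S] fails at [x] only if every [S j] has zero sum. *)
Lemma card_or_bad_at x : (#|[set S | x \in or_bad S]| * 2 ^ l <= (2 ^ m) ^ l)%N.
Proof.
have [exact_x|inexact] := boolP (inputs_exact x); last first.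
  by rewrite (_ : [set S | _] = set0) ?cards0 //; apply/setP => S; rewrite !inE (negbTE inexact).
have psE i : ps i x = b2F (bs i x) by apply/eqP; move/forallP: exact_x.
have [/existsP [i0 bs_i0] | none] := boolP [exists i, bs i x]; last first.
  rewrite (_ : [set S | _] = set0) ?cards0 //; apply/setP => S.
  rewrite !inE exact_x (negbTE none) /= /or_approx big1 ?subrr ?eqxx // => j _.
  rewrite big1 ?expr0n ?subr0 // => i _; rewrite psE.
  by move: none; rewrite negb_exists => /forallP /(_ i) /negbTE ->.
set Z := [set T : {set 'I_m} | (\sum_(i in T) b2F (bs i x) == 0)%R].
have badZ : [set S | x \in or_bad S] \subset ffun_on (mem Z).
  apply/subsetP => S; rewrite !inE exact_x /= => bad; apply/ffun_onP => j.
  rewrite inE; apply: contraR bad => nz; rewrite /or_approx (bigD1 j) //=.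
  under eq_bigr do rewrite psE.
  by rewrite expr2 Z3_sqrf // subrr mul0r subr0 /b2F; case: existsP => // -[]; exists i0.
have Zhalf : (#|Z| * 2 <= 2 ^ m)%N.
  by apply: (card_zero_sum_subsets (i0 := i0)); rewrite /b2F bs_i0 oner_neq0.
apply: leq_trans (_ : (#|Z| ^ l * 2 ^ l <= _)%N).
  by rewrite leq_mul2r (leq_trans (subset_leq_card badZ)) ?orbT // card_ffun_on card_ord.
rewrite -expnMn; have [->|l_gt0] := posnP l; first by rewrite !expn0.
by rewrite leq_exp2r.
Qed.

Lemma or_approx_exists D : (forall i, deg_le D (ps i)) ->
  exists q, deg_le (l * (D + D)) q /\
    (#|[set x | inputs_exact x && (q x != b2F [exists i, bs i x])]| * 2 ^ l <= 2 ^ n)%N.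
Proof.
move=> Dps; have [S badS] : exists S, (#|[set x | x \in or_bad S]| * 2 ^ l <= #|X|)%N.
  apply: exists_good_sample => [|x]; first by rewrite card_ffun card_setsT !card_ord !expn_gt0.
  by apply: leq_trans (card_or_bad_at x) _; rewrite card_ffun card_setsT !card_ord.
exists (or_approx S); split; first exact: deg_le_or_approx.
move: badS; rewrite card_ffun card_bool card_ord.
by congr (_ <= _)%N; congr (_ * _)%N; apply: eq_card => x; rewrite !inE.
Qed.

End RazborovOr.

Local Close Scope ring_scope.

Lemma circ_nested_ind (P : circ -> Prop) :
  (forall i, P (CInp i)) -> (forall b, P (CConst b)) -> (forall c, P c -> P (CNot c)) ->
  (forall s, (forall c, List.In c s -> P c) -> P (CAnd s)) ->
  (forall s, (forall c, List.In c s -> P c) -> P (COr s)) ->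
  forall c, P c.
Proof.
move=> Pi Pb Pn Pa Po; fix IH 1 => -[i|b|c|s|s].
- exact: Pi.
- exact: Pb.
- exact/Pn/IH.
- apply: Pa; move: s; fix IHs 1 => -[|c s] d /= => [[] | [<- | ]]; [exact: IH | exact: IHs].
- apply: Po; move: s; fix IHs 1 => -[|c s] d /= => [[] | [<- | ]]; [exact: IH | exact: IHs].
Qed.

Lemma In_nth (T : Type) (x0 : T) s i : i < size s -> List.In (nth x0 s i) s.
Proof. by elim: s i => [|x s IH] [|i] //= => [_|/IH]; [left | right]. Qed.

Lemma nth_le_maxn (s : seq nat) i : nth 0 s i <= foldr maxn 0 s.
Proof.
elim: s i => [|a s IH] [|i] //=; first exact: leq_maxl.
exact: leq_trans (IH i) (leq_maxr _ _).
Qed.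

Definition gate (neg : bool) (s : seq circ) := if neg then CAnd s else COr s.

Lemma ceval_gate x neg s : ceval x (gate neg s) =
  neg (+) [exists i : 'I_(size s), neg (+) ceval x (nth (CConst false) s i)].
Proof.
have hasE (P : pred circ) : has P s = [exists i : 'I_(size s), P (nth (CConst false) s i)].
  by apply/(has_nthP (CConst false))/existsP => [[i lt_is Pi]|[i Pi]]; [exists (Ordinal lt_is)|exists i].
case: neg => /=.
  by rewrite all_map -(hasE (predC (ceval x))) has_predC negbK; apply: eq_all.
by rewrite has_map -(hasE (ceval x)); apply: eq_has.
Qed.

Lemma csize_gate neg s : csize (gate neg s) = (sumn (map csize s)).+1.
Proof. by case: neg. Qed.

Lemma cdepth_gate neg s : cdepth (gate neg s) = (foldr maxn 0 (map cdepth s)).+1.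
Proof. by case: neg. Qed.

Definition inp n (x : {ffun 'I_n -> bool}) (i : nat) : bool :=
  if insub i is Some u then x u else false.

Section CircuitApproximation.
Variables n l : nat.
Hypothesis l_gt0 : 0 < l.
Local Notation X := {ffun 'I_n -> bool}.
Local Open Scope ring_scope.

Definition err (c : circ) (p : X -> F) := #|[set x : X | p x != b2F (ceval (inp x) c)]|.

Definition approximable c := exists2 p : X -> F,
  deg_le ((2 * l) ^ cdepth c) p & (err c p * 2 ^ l <= csize c * 2 ^ n)%N.

Definition fneg (neg : bool) (a : F) := if neg then 1 - a else a.

Lemma fneg_eq neg a b : (fneg neg a == fneg neg b) = (a == b).
Proof. by case: neg => //=; rewrite (inj_eq (can_inj (subKr 1))). Qed.

Lemma b2F_addb neg b : b2F (neg (+) b) = fneg neg (b2F b).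
Proof. by case: neg; case: b; rewrite /= ?subr0 ?subrr. Qed.

Lemma deg_le_fneg neg D (f : X -> F) : deg_le D f -> deg_le D (fun x => fneg neg (f x)).
Proof. by case: neg => // Df; apply: deg_le_sub Df; exact: deg_le_const. Qed.

Lemma approximable_gate neg s :
  (forall c, List.In c s -> approximable c) -> approximable (gate neg s).
Proof.
set c_ := nth (CConst false) s => apx.
have /fin_all_exists2 [p Dp errp] (i : 'I_(size s)) : approximable (c_ i).
  exact/apx/In_nth.
set d := foldr maxn 0 (map cdepth s).
have Dnp i : deg_le ((2 * l) ^ d) (fun x => fneg neg (p i x)).
  apply/deg_le_fneg/(deg_le_mono _ (Dp i)); rewrite leq_pexp2l ?muln_gt0 ?l_gt0 //.
  by rewrite /d -(nth_map _ 0) ?ltn_ord // nth_le_maxn.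
have [q [Dq badq]] := or_approx_exists l (fun i x => neg (+) ceval (inp x) (c_ i)) Dnp.
exists (fun x => fneg neg (q x)).
  rewrite cdepth_gate; apply/deg_le_fneg/(deg_le_mono _ Dq).
  by rewrite expnS addnn -mul2n mulnA [(l * 2)%N]mulnC.
pose E i := [set x : X | p i x != b2F (ceval (inp x) (c_ i))].
set Bad := [set x | _ && _] in badq.
have err_sub : [set x : X | fneg neg (q x) != b2F (ceval (inp x) (gate neg s))]
    \subset (\bigcup_i E i) :|: Bad.
  apply/subsetP => x; rewrite !inE ceval_gate b2F_addb fneg_eq => qx.
  have [/existsP [i xi]|] := boolP [exists i, x \in E i].
    by apply/orP; left; apply/bigcupP; exists i.
  rewrite negb_exists => /forallP exact_x; apply/orP; right.
  rewrite ?qx ?andbT; apply/forallP => i.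
  by move: (exact_x i); rewrite inE negbK b2F_addb fneg_eq.
apply: leq_trans (_ : ((\sum_i #|E i|) + #|Bad|) * 2 ^ l <= _)%N.
  rewrite leq_mul2r (leq_trans (subset_leq_card err_sub)) ?orbT //.
  by apply: leq_trans (leq_card_setU _ _) _; rewrite leq_add2r card_bigcup_le.
rewrite csize_gate mulnDl mulSn addnC leq_add // big_distrl /=.
rewrite sumnE big_map (big_nth (CConst false)) big_mkord big_distrl /=.
by apply: leq_sum => i _; exact: errp.
Qed.

Lemma circ_approximable c : approximable c.
Proof.
elim/circ_nested_ind: c => [i|b|c [p Dp errp]|s apx|s apx].
- case Ei: (insub i : option 'I_n) => [u|].
    exists (fun x => (1 + 1) * (1 - sg (x u))).
      exact/deg_le_scale/deg_le_sub/deg_le_sg/deg_le_const.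
    rewrite /err (_ : [set x | _] = set0) ?cards0 //; apply/setP => x.
    by rewrite !inE /inp /= Ei /sg /b2F; case: (x u); apply/negbTE/negPn/eqP/val_inj.
  exists (fun=> 0); first exact: deg_le_const.
  rewrite /err (_ : [set x | _] = set0) ?cards0 //.
  by apply/setP => x; rewrite !inE /inp /= Ei.
- exists (fun=> b2F b); first exact: deg_le_const.
  by rewrite /err (_ : [set x | _] = set0) ?cards0 //; apply/setP => x; rewrite !inE eqxx.
- exists (fun x => fneg true (p x)).
    by apply/deg_le_fneg/(deg_le_mono _ Dp); rewrite leq_pexp2l ?muln_gt0 ?l_gt0.
  apply: leq_trans _ (leq_trans errp _); last by rewrite leq_mul2r leqnSn orbT.
  rewrite leq_mul2r; apply/orP; right; apply/subset_leq_card/subsetP => x.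
  by rewrite !inE /= (b2F_addb true) /= (inj_eq (can_inj (subKr 1))).
- exact: (approximable_gate true).
- exact: (approximable_gate false).
Qed.

End CircuitApproximation.

Lemma leq_bin_odd_upper m k : 'C(m.*2.+1, m.+1 + k) <= 'C(m.*2.+1, m.+1).
Proof.
elim: k => [|k IH]; first by rewrite addn0.
apply: leq_trans IH; rewrite addnS.
have step := mul_bin_left m.*2.+1 (m.+1 + k).
have le : m.*2.+1 - (m.+1 + k) <= (m.+1 + k).+1 by rewrite -addnn; lia.
rewrite -(leq_pmul2r (ltn0Sn (m.+1 + k))) [X in X <= _]mulnC step.
by rewrite [X in _ <= X]mulnC leq_mul2r le orbT.
Qed.

Lemma bin_odd_mid m : 'C(m.*2.+1, m.+1) <= 2 * 'C(m.*2, m).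
Proof.
have E := mul_bin_diag m.*2.+1 m; rewrite /= in E.
rewrite -(leq_pmul2l (ltn0Sn m)) -E mulnA.
by rewrite leq_mul2r -addnn; apply/orP; right; lia.
Qed.

Lemma bin_central_sqr m : 'C(m.*2, m) ^ 2 * m.*2.+1 <= 16 ^ m.
Proof.
elim: m => [|m IH]; first by rewrite bin0.
have E1 : 'C(m.+1.*2, m.+1) = 2 * 'C(m.*2.+1, m.+1).
  have le : m.+1 <= m.*2.+1 by rewrite -addnn; lia.
  have E : 'C(m.*2.+1, m) = 'C(m.*2.+1, m.+1).
    by rewrite -(bin_sub le); congr 'C(_, _); rewrite -addnn; lia.
  by rewrite doubleS binS E mul2n addnn.
have E2 := mul_bin_diag m.*2.+1 m; rewrite /= in E2.
set a := 'C(m.*2, m) in IH E2 *; set b := 'C(m.*2.+1, m.+1) in E1 E2 *.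
rewrite E1 doubleS -(leq_pmul2r (_ : 0 < m.+1 ^ 2)) ?expn_gt0 //.
have -> : (2 * b) ^ 2 * (m.*2.+2).+1 * m.+1 ^ 2 = 4 * m.*2.+3 * (m.+1 * b) ^ 2.
  by rewrite !expnMn; ring.
rewrite -E2 expnS.
apply: leq_trans (_ : 4 * m.*2.+3 * m.*2.+1 * 16 ^ m <= _).
  have -> : 4 * m.*2.+3 * (m.*2.+1 * a) ^ 2 = 4 * m.*2.+3 * m.*2.+1 * (a ^ 2 * m.*2.+1).
    by rewrite expnMn; ring.
  by rewrite leq_mul2l IH orbT.
rewrite expnS; set t := 16 ^ m; rewrite -addnn; nia.
Qed.

Lemma card_small_subsets m D :
  #|[set T : {set 'I_(m.*2.+1)} | #|T| <= D + m]| <= 4 ^ m + D * 'C(m.*2.+1, m.+1).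
Proof.
set n := m.*2.+1.
pose A := [set T : {set 'I_n} | #|T| <= m].
pose B (k : 'I_D) := [set T : {set 'I_n} | #|T| == m.+1 + k].
have sub : [set T : {set 'I_n} | #|T| <= D + m] \subset A :|: \bigcup_k B k.
  apply/subsetP => T; rewrite !inE => le_TDm.
  have [//|lt_mT] := leqP #|T| m.
  have lt_kD : #|T| - m.+1 < D by lia.
  by apply/orP; right; apply/bigcupP; exists (Ordinal lt_kD); rewrite // inE /= subnKC.
apply: leq_trans (subset_leq_card sub) _.
apply: leq_trans (leq_card_setU _ _) _; apply: leq_add.
  have compl : [set ~: T | T in A] \subset ~: A.
    apply/subsetP => _ /imsetP [T + ->]; rewrite !inE.
    have := cardsC T; rewrite card_ord => CT.
    have : n = m + m + 1 by rewrite /n -addnn addn1.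
    lia.
  have := subset_leq_card compl; rewrite card_imset; last exact: setC_inj.
  have := cardsC A; rewrite card_setsT card_ord.
  have -> : 2 ^ n = 2 * 4 ^ m by rewrite /n expnS -mul2n expnM.
  lia.
apply: leq_trans (card_bigcup_le _) _.
rewrite -[X in _ <= X * _]card_ord -sum_nat_const.
by apply: leq_sum => k _; rewrite /B card_draws card_ord; exact: leq_bin_odd_upper.
Qed.

Lemma parity_approx_degree m D (p : {ffun 'I_(m.*2.+1) -> bool} -> F) : deg_le D p ->
  4 * #|[set x | (p x != b2F (odd #|[set i | x i]|))%R]| <= 2 ^ m.*2.+1 ->
  m.*2.+1 <= 16 * D ^ 2.
Proof.
set n := m.*2.+1; set Bad := [set x | _] => Dp errBad.
have four_n : 2 ^ n = 2 * 4 ^ m by rewrite /n expnS -mul2n expnM.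
have good : #|~: Bad| <= 4 ^ m + D * 'C(m.*2.+1, m.+1).
  apply: leq_trans (card_small_subsets m D); move: (card_agree_parity Dp).
  rewrite -/n (_ : n./2 = m); last by rewrite /n /= uphalf_double.
  by apply: leq_trans; rewrite leq_eqVlt; apply/orP; left; apply/eqP/eq_card => x; rewrite !inE negbK.
have split : #|Bad| + #|~: Bad| = 2 * 4 ^ m.
  by rewrite cardsC card_ffun card_bool card_ord.
have mid := bin_odd_mid m; have central := bin_central_sqr m.
set a := 'C(m.*2, m) in mid central; set b := 'C(m.*2.+1, m.+1) in good mid.
have four_m : 4 ^ m <= 4 * D * a.
  have := leq_mul (leqnn D) mid; move: good errBad split; rewrite four_n.
  set g := #|~: Bad|; set e := #|Bad|; set q := 4 ^ m; nia.
have sixteen_m : 16 ^ m <= 16 * D ^ 2 * a ^ 2.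
  rewrite (_ : 16 = 4 * 4) // expnMn.
  by apply: leq_trans (leq_mul four_m four_m) _; rewrite !expnS expn0 !muln1; nia.
rewrite -(leq_pmul2l (expn_gt0 16 m)); apply: leq_trans (_ : 16 * D ^ 2 * (a ^ 2 * n) <= _).
  by rewrite mulnA leq_mul2r sixteen_m orbT.
by rewrite mulnC leq_mul2r central orbT.
Qed.

Lemma parity_circuit_lower_bound m l c : 0 < l ->
  (forall x : {ffun 'I_(m.*2.+1) -> bool}, ceval (inp x) c = odd #|[set i | x i]|) ->
  4 * csize c <= 2 ^ l -> m.*2.+1 <= 16 * ((2 * l) ^ cdepth c) ^ 2.
Proof.
move=> l_gt0 parity small; have [p Dp errp] := circ_approximable m.*2.+1 l_gt0 c.
apply: parity_approx_degree Dp _; rewrite -(leq_pmul2r (expn_gt0 2 l)).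
have -> : #|[set x | (p x != b2F (odd #|[set i | x i]|))%R]| = err c p.
  by apply: eq_card => x; rewrite !inE parity.
rewrite -mulnA; apply: leq_trans (leq_mul (leqnn 4) errp) _.
by rewrite mulnA [X in _ <= X]mulnC leq_mul2r small orbT.
Qed.

Lemma sqr_le_exp2 u : 4 <= u -> u * u <= 2 ^ u.
Proof.
elim: u => // u IH; rewrite leq_eqVlt => /orP [/eqP <-|] //.
by rewrite ltnS => le4u; have := IH le4u; rewrite expnS; nia.
Qed.

Lemma exp2_dominates_poly A B : exists t, A * t.+1 ^ B < 2 ^ t.
Proof.
set u := A + B + 4; exists (2 ^ u).-1; rewrite prednK ?expn_gt0 // -expnM.
apply: leq_trans (_ : 2 ^ A * 2 ^ (u * B) <= _).
  by rewrite ltn_pmul2r ?expn_gt0 // ltn_expl.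
rewrite -expnD leq_exp2l //.
have := @sqr_le_exp2 u; have : A <= u * A by rewrite leq_pmull // /u; lia.
rewrite /u; set w := 2 ^ _; nia.
Qed.

Lemma parity_not_in_AC0 d c (C : nat -> circ) :
  (forall n, cdepth (C n) <= d) -> (forall n, csize (C n) <= c * n.+1 ^ c) ->
  ~ (forall n (x : {ffun 'I_n -> bool}), ceval (inp x) (C n) = odd #|[set i | x i]|).
Proof.
move=> depthC sizeC parityC; set K := 2 * (c + c.+2).
(* On [n = 2^(t+1) - 1] inputs the size bound is a power of 2 times [c], and
   [l := (t+1)(2c+2)] exceeds its logarithm by 2 while [2l = K (t+1)]. *)
have [t grow] := exp2_dominates_poly (16 * K ^ (2 * d)) (2 * d).
set m := (2 ^ t).-1; set l := t.+1 * (c + c.+2).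
have n_succ : m.*2.+2 = 2 ^ t.+1 by rewrite /m expnS; have := expn_gt0 2 t; lia.
have small : 4 * csize (C m.*2.+1) <= 2 ^ l.
  apply: leq_trans (leq_mul (leqnn 4) (sizeC _)) _.
  rewrite n_succ -expnM /l mulnDr expnD mulnCA mulnA mulnC leq_mul2l; apply/orP; right.
  have c4 : c * 4 <= 2 ^ c.+2 by rewrite !expnS; have := ltn_expl c (isT : 1 < 2); lia.
  by apply: leq_trans c4 _; rewrite leq_exp2l //; exact: leq_pmull.
have l_gt0 : 0 < l by rewrite /l muln_gt0 addnS.
have := parity_circuit_lower_bound l_gt0 (parityC _) small; rewrite -expnM.
have deg_bound : (2 * l) ^ (cdepth (C m.*2.+1) * 2) <= K ^ (2 * d) * t.+1 ^ (2 * d).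
  rewrite -expnMn; apply: leq_trans (leq_pexp2l _ (_ : _ <= 2 * d)) _.
  - by rewrite muln_gt0.
  - by rewrite mulnC leq_mul2l depthC orbT.
  - by rewrite /K /l -mulnA [t.+1 * _]mulnC.
have lower : 2 ^ t <= m.*2.+1 by rewrite /m -addnn; have := expn_gt0 2 t; lia.
move: grow deg_bound lower; set L := _ ^ (_ * 2); set P := t.+1 ^ _; set Q := K ^ _; nia.
Qed.

Fixpoint csubst (sub : nat -> circ) (c : circ) : circ :=
  match c with
  | CInp i => sub i
  | CConst b => CConst b
  | CNot d => CNot (csubst sub d)
  | CAnd s => CAnd (map (csubst sub) s)
  | COr s => COr (map (csubst sub) s)
  end.

Lemma eq_in_map_In (A B : Type) (f g : A -> B) (s : seq A) :
  (forall a, List.In a s -> f a = g a) -> map f s = map g s.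
Proof. by elim: s => //= a s IH fg; rewrite fg ?IH //; [move=> b sb; apply: fg; right | left]. Qed.

Lemma maxn_map_In_le (A : Type) (f g : A -> nat) (s : seq A) :
  (forall a, List.In a s -> f a <= (g a).+1) ->
  foldr maxn 0 (map f s) <= (foldr maxn 0 (map g s)).+1.
Proof.
elim: s => //= a s IH fg; have := fg a (or_introl erefl).
by have := IH (fun b sb => fg b (or_intror sb)); lia.
Qed.

Lemma sumn_map_In_le (A : Type) (f g : A -> nat) (s : seq A) :
  (forall a, List.In a s -> f a <= 2 * g a) -> sumn (map f s) <= 2 * sumn (map g s).
Proof.
elim: s => //= a s IH fg; have := fg a (or_introl erefl).
by have := IH (fun b sb => fg b (or_intror sb)); lia.
Qed.

Lemma ceval_subst x e sub c : (forall i, ceval x (sub i) = e i) ->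
  ceval x (csubst sub c) = ceval e c.
Proof.
move=> subE; elim/circ_nested_ind: c => [i|b|c IH|s IH|s IH] //=; first by rewrite IH.
- by rewrite -map_comp; congr (all id _); apply: eq_in_map_In.
- by rewrite -map_comp; congr (has id _); apply: eq_in_map_In.
Qed.

Lemma cdepth_subst sub c : (forall i, cdepth (sub i) <= 1) ->
  cdepth (csubst sub c) <= (cdepth c).+1.
Proof.
move=> sub1; elim/circ_nested_ind: c => [i|b|c IH|s IH|s IH] //=;
  by rewrite ltnS // -map_comp; apply: maxn_map_In_le.
Qed.

Lemma csize_subst sub c : (forall i, csize (sub i) <= 2) ->
  csize (csubst sub c) <= 2 * csize c.
Proof.
move=> sub2; elim/circ_nested_ind: c => [i|b|c IH|s IH|s IH] //=; first lia;
  by rewrite -map_comp; have := sumn_map_In_le (f := csize \o csubst sub) IH; lia.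
Qed.

Definition loop_formula (op : rm_op) : qf unit :=
  if op is RMdel then QNot (QEdge tt tt) else QEdge tt tt.

Definition loop_bit (op : rm_op) (b : bool) := if op is RMdel then b else ~~ b.

(* The vertices [u] with [y u] are exactly those violating [loop_formula op]. *)
Definition loop_graph op N (y : {ffun 'I_N -> bool}) : rel 'I_N :=
  fun u v => (u == v) && loop_bit op (y u).

Lemma loop_graph_sym op N y : symmetric (@loop_graph op N y).
Proof. by move=> u v; rewrite /loop_graph eq_sym; case: eqP => // ->. Qed.

Lemma in_diag N (A : {set 'I_N}) u v :
  ((u, v) \in [set (w, w) | w in A]) = (u == v) && (u \in A).
Proof.
apply/imsetP/andP => [[w wA [-> ->]]|[/eqP -> vA]]; first by rewrite eqxx.
by exists v.
Qed.

Lemma pair_norm_diag N (A : {set 'I_N}) : pair_norm [set (w, w) | w in A] = #|A|.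
Proof.
rewrite /pair_norm -imset_comp (eq_imset (g := set1)); last by move=> w /=; rewrite setUid.
by rewrite card_imset //; exact: set1_inj.
Qed.

Lemma RM_loop_graph op N (y : {ffun 'I_N -> bool}) k :
  RM op (loop_formula op) (loop_graph op y) k <-> #|[set u | y u]| <= k.
Proof.
split=> [[S [normS _ satS _]] | le_yk].
  have loopS u : y u -> (u, u) \in S.
    move=> yu; move: (satS u); rewrite /symdiff /loop_graph.
    by case: op {satS} => /=; rewrite eqxx yu; case: ((u, u) \in S).
  apply: leq_trans normS; rewrite /pair_norm -(card_imset _ (@set1_inj _)).
  apply/subset_leq_card/subsetP => _ /imsetP [u + ->]; rewrite inE => yu.
  by apply/imsetP; exists (u, u); rewrite ?loopS //= setUid.
exists [set (w, w) | w in [set u | y u]]; split; first by rewrite pair_norm_diag.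
- move=> u v; rewrite /symdiff /loop_graph (in_diag _ u v) (in_diag _ v u) !inE.
  by case: (u =P v) => [->|/eqP uv]; rewrite ?eqxx // eq_sym (negbTE uv).
- by move=> u; case: op; rewrite /= /symdiff /loop_graph in_diag !inE eqxx; case: (y u).
- by case: op => // -[u v]; rewrite in_diag inE => /andP [/eqP -> yv]; rewrite /loop_graph /= eqxx yv.
Qed.

Lemma inp_ord N (y : {ffun 'I_N -> bool}) (u : 'I_N) : inp y u = y u.
Proof. by rewrite /inp valK. Qed.

Definition encode_circ (op : rm_op) (N j i : nat) : circ :=
  if i < N * N then
    if N.+1 %| i then (if op is RMdel then CInp (i %/ N.+1) else CNot (CInp (i %/ N.+1)))
    else CConst false
  else CConst ((i < 2 * (N * N)) && (i - N * N < j)).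

Lemma ceval_encode_circ op N j (y : {ffun 'I_N -> bool}) i :
  ceval (inp y) (encode_circ op N j i) = encode (loop_graph op y) j i.
Proof.
rewrite /encode_circ /encode; case: ifP => iN; last by case: ifP.
have -> : ceval (inp y) (if N.+1 %| i then (if op is RMdel then CInp (i %/ N.+1)
            else CNot (CInp (i %/ N.+1))) else CConst false)
          = (N.+1 %| i) && loop_bit op (inp y (i %/ N.+1)).
  by case: ifP => //= _; case: op.
apply/idP/existsP => [/andP [/dvdnP [u iE] yu]|[u /existsP [v /andP [/eqP -> /andP [/eqP <-]]]]].
  have uN : u < N by rewrite iE in iN; nia.
  exists (Ordinal uN); apply/existsP; exists (Ordinal uN).
  rewrite /loop_graph eqxx iE mulnS addnC eqxx /=.
  by move: yu; rewrite iE mulnK // -[u]/(nat_of_ord (Ordinal uN)) inp_ord.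
by rewrite -mulnSr dvdn_mull //= mulnK // inp_ord.
Qed.

Lemma cdepth_encode_circ op N j i : cdepth (encode_circ op N j i) <= 1.
Proof. by rewrite /encode_circ; case: ifP => // _; case: ifP => // _; case: op. Qed.

Lemma csize_encode_circ op N j i : csize (encode_circ op N j i) <= 2.
Proof. by rewrite /encode_circ; case: ifP => // _; case: ifP => // _; case: op. Qed.

Definition threshold_circ op N C j := csubst (encode_circ op N j) C.

Definition parity_circ op N C := COr
  [seq CAnd [:: threshold_circ op N C j; CNot (threshold_circ op N C j.-1)]
  | j <- [seq j <- iota 0 N.+1 | odd j]].

Section ParityFromRM.
Variables (op : rm_op) (N : nat) (C : circ).
Hypothesis C_RM : forall (E : rel 'I_N) (k : nat), symmetric E ->
  (ceval (encode E k) C <-> RM op (loop_formula op) E k).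

Lemma ceval_threshold_circ (y : {ffun 'I_N -> bool}) j :
  ceval (inp y) (threshold_circ op N C j) = (#|[set u | y u]| <= j).
Proof.
rewrite (ceval_subst _ (ceval_encode_circ _ _ _)).
have := C_RM j (@loop_graph_sym op N y); rewrite RM_loop_graph => eqv.
by apply/idP/idP => /eqv.
Qed.

Lemma ceval_parity_circ (y : {ffun 'I_N -> bool}) :
  ceval (inp y) (parity_circ op N C) = odd #|[set u | y u]|.
Proof.
rewrite /parity_circ /= -map_comp has_map; set K := #|[set u | y u]|.
have KN : K <= N by rewrite /K -[X in _ <= X](card_ord N) max_card.
apply/hasP/idP => [[j]|oddK].
  rewrite mem_filter /= !ceval_threshold_circ andbT => /andP [oddj _] /andP [Kj jK].
  suff -> : K = j by [].
  by rewrite /K; move: oddj Kj jK; case: j => //= j _; lia.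
exists K; first by rewrite mem_filter oddK mem_iota /=; lia.
rewrite /= !ceval_threshold_circ leqnn /= andbT -/K.
by move: oddK; case: (K) => //= k _; rewrite ltnn.
Qed.

End ParityFromRM.

Lemma cdepth_parity_circ op N C : cdepth (parity_circ op N C) <= cdepth C + 4.
Proof.
rewrite addnS /= ltnS -map_comp; elim: (filter _ _) => //= j s IH.
rewrite geq_max IH andbT.
have := cdepth_subst C (@cdepth_encode_circ op N j).
have := cdepth_subst C (@cdepth_encode_circ op N j.-1).
rewrite /threshold_circ; lia.
Qed.

Lemma sumn_map_le (A : Type) (f : A -> nat) (s : seq A) K :
  (forall a, f a <= K) -> sumn (map f s) <= size s * K.
Proof. by move=> fK; elim: s => //= a s IH; rewrite mulSn leq_add. Qed.

Lemma csize_parity_circ op N C : csize (parity_circ op N C) <= N.+1 * (4 * csize C + 3).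
Proof.
set s := filter odd (iota 0 N.+1).
have size_s : size s <= N.+1 by rewrite -[X in _ <= X](size_iota 0) size_filter count_size.
have : sumn (map csize [seq CAnd [:: threshold_circ op N C j; CNot (threshold_circ op N C j.-1)] | j <- s])
    <= size s * (4 * csize C + 2).
  rewrite -map_comp; apply: sumn_map_le => j /=.
  have := csize_subst C (@csize_encode_circ op N j).
  have := csize_subst C (@csize_encode_circ op N j.-1).
  rewrite /threshold_circ; lia.
rewrite /parity_circ /= -/s; set t := sumn _; nia.
Qed.

Lemma csize_parity_circ_poly op N C c : csize C <= c * N.+1 ^ c ->
  csize (parity_circ op N C) <= (4 * c + 3) * N.+1 ^ (4 * c + 3).
Proof.
move=> sizeC; apply: leq_trans (csize_parity_circ _ _ _) _.
apply: leq_trans (_ : (4 * c + 3) * N.+1 ^ c.+1 <= _).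
  rewrite expnS; have := expn_gt0 N.+1 c; move: sizeC; set P := N.+1 ^ c; nia.
by rewrite leq_mul2l leq_pexp2l ?orbT //; lia.
Qed.

Theorem lemma4p4 :
  forall op : rm_op, exists psi : qf unit, ~ in_AC0 (RM op psi).
Proof.
move=> op; exists (loop_formula op) => -[d [c [C AC0]]].
apply: (@parity_not_in_AC0 (d + 4) (4 * c + 3) (fun N => parity_circ op N (C N))) => N.
- by have [depth _ _] := AC0 N; apply: leq_trans (cdepth_parity_circ _ _ _) _; rewrite leq_add2r.
- by have [_ size _] := AC0 N; apply: csize_parity_circ_poly.
- by move=> y; have [_ _ correct] := AC0 N; apply: ceval_parity_circ.
Qed.
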